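(* Let $K \geq 1$ and $n \ge 1$. For $k = 1, \ldots, K$ let $A_k$ and $E_k$ be real $d_k \times n$ matrices, let $r_k = \mathrm{rank}(A_k) \geq 1$, let $X_k = A_k + E_k$, and let $\tilde{A}_k = \tilde{U}_k \tilde{\Sigma}_k \tilde{V}_k^T$ be the rank-$r_k$ truncated singular value decomposition of $X_k$ (so $\tilde{U}_k$ is $d_k \times r_k$ and $\tilde{V}_k$ is $n \times r_k$ with orthonormal columns, and $\tilde{\Sigma}_k$ is the diagonal matrix of the $r_k$ largest singular values of $X_k$), and assume $\sigma_{\min}(\tilde{\Sigma}_k) > 0$. Let $\theta_k$ be the largest principal angle between $\mathrm{row}(A_k)$ and $\mathrm{row}(\tilde{A}_k)$. Let $r_J = \dim \bigcap_{k=1}^K \mathrm{row}(A_k)$, and let $M$ be the vertical concatenation $$M = \begin{bmatrix} \tilde{V}_1^T \\ \vdots \\ \tilde{V}_K^T \end{bmatrix}$$ with singular values $\sigma_{M,1} \geq \sigma_{M,2} \geq \cdots$. Then for every $i = 1, \ldots, r_J$, $$\sigma_{M,i}^2 \;\geq\; K - \sum_{k=1}^K \sin^2\theta_k \;\geq\; K - \sum_{k=1}^K \left(\frac{\max(\|E_k \tilde{V}_k\|, \|E_k^T \tilde{U}_k\|)}{\sigma_{\min}(\tilde{\Sigma}_k)}\right)^2.$$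
   Context: $\mathrm{row}(B) \subseteq \mathbb{R}^n$ denotes the row space of a matrix $B$ with $n$ columns. $\|\cdot\|$ denotes the spectral (operator $L^2$) norm, and $\sigma_{\min}(\tilde{\Sigma}_k)$ is the smallest diagonal entry of $\tilde{\Sigma}_k$. For two subspaces of equal dimension, the sine of their largest principal angle equals the spectral norm of the difference of the orthogonal projections onto them. *)

From HB Require Import structures.
From mathcomp Require Import all_boot all_order all_algebra.
From mathcomp Require Import boolp classical_sets reals.
Set Implicit Arguments. Unset Strict Implicit. Unset Printing Implicit Defensive.
Import Order.TTheory GRing.Theory Num.Theory.
Local Open Scope ring_scope.
Local Open Scope classical_set_scope.

Section Defs.
Variable R : realType.

Definition l2norm n (v : 'cV[R]_n) : R := Num.sqrt (\sum_i v i 0 ^+ 2).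

Definition specnorm m n (B : 'M[R]_(m, n)) : R :=
  sup [set l2norm (B *m v) | v in [set v : 'cV[R]_n | l2norm v = 1]].

Definition diagmx_of d n (s : nat -> R) : 'M[R]_(d, n) :=
  \matrix_(i < d, j < n) (if val i == val j then s (val i) else 0).

(* Full singular value decomposition X = U S V^T with U, V orthogonal and
   S diagonal with the singular values s 0 >= s 1 >= ... >= 0 on its diagonal
   (s i = 0 for i >= min(d,n), i.e. s is padded with zeros).
   s i is the (i+1)-th largest singular value. *)
Definition is_svd d n (X : 'M[R]_(d, n)) (U : 'M[R]_d) (s : nat -> R)
    (V : 'M[R]_n) : Prop :=
  [/\ U^T *m U = 1%:M, V^T *m V = 1%:M,
      X = U *m diagmx_of d n s *m V^T,
      (forall i j, (i <= j)%N -> s j <= s i) &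
      (forall i, 0 <= s i /\ ((minn d n <= i)%N -> s i = 0))].

(* first r columns of a matrix (columns with the same index). *)
Definition lcols m p (r : nat) (U : 'M[R]_(m, p)) : 'M[R]_(m, r) :=
  \matrix_(i < m, j < r) \sum_(j' : 'I_p | val j' == val j) U i j'.

Definition trunc_U d r (U : 'M[R]_d) : 'M[R]_(d, r) := lcols r U.
Definition trunc_V n r (V : 'M[R]_n) : 'M[R]_(n, r) := lcols r V.
Definition trunc_S r (s : nat -> R) : 'M[R]_r := diagmx_of r r s.
Definition trunc_A d n r (U : 'M[R]_d) (s : nat -> R) (V : 'M[R]_n)
  : 'M[R]_(d, n) := trunc_U r U *m trunc_S r s *m (trunc_V r V)^T.

Definition rowproj m n (B : 'M[R]_(m, n)) : 'M[R]_n :=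
  let Bb := row_base B in (Bb^T *m invmx (Bb *m Bb^T) *m Bb).

(* sine of the largest principal angle between row(B1) and row(B2)
   (of equal dimension): spectral norm of the difference of the projections. *)
Definition sin_max_angle m1 m2 n (B1 : 'M[R]_(m1, n)) (B2 : 'M[R]_(m2, n)) : R :=
  specnorm (rowproj B1 - rowproj B2).

Definition dim_cap_rows K n (d : 'I_K -> nat) (A : forall k, 'M[R]_(d k, n)) : nat :=
  \rank (\big[capmx/1%:M]_(k < K) (<<A k>>)%MS).

End Defs.

From HB Require Import structures.
From mathcomp Require Import all_boot all_order all_algebra.
From mathcomp Require Import boolp classical_sets reals.
From mathcomp Require Import ring lra zify.
Import Order.TTheory GRing.Theory Num.Theory.
Local Open Scope ring_scope.
Set Implicit Arguments. Unset Strict Implicit. Unset Printing Implicit Defensive.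

(* Let P_k and Q_k be the orthogonal projections onto row(A_k) and row(Ã_k) = range(Ṽ_k).
   For x in the intersection of the row spaces, |Ṽ_k^T x|^2 = |Q_k x|^2
   = |x|^2 - |(P_k - Q_k) x|^2 >= (1 - sin^2 θ_k) |x|^2; summing over k gives
   |M x|^2 >= (K - Σ sin^2 θ_k) |x|^2.  The intersection has dimension r_J >= i, so it
   contains some x != 0 orthogonal to the first i - 1 right singular vectors of M, and for
   such x we have |M x| <= σ_{M,i} |x|.
   For the angles, (1 - P_k) A_k^T = 0 and Ṽ_k = X_k^T Ũ_k Σ̃_k^{-1} give
   ‖(1 - P_k) Q_k‖ <= ‖E_k^T Ũ_k‖ / σ_min(Σ̃_k).  As P_k and Q_k have equal rank,
   ‖P_k (1 - Q_k)‖ obeys the same bound, and P_k - Q_k is the orthogonal sum of these two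
   pieces. *)

Section DotProduct.
Variable R : realFieldType.
Implicit Types (n : nat) (a : R).

Definition dotv n (u v : 'cV[R]_n) : R := (u^T *m v) 0 0.
Definition sqnorm n (v : 'cV[R]_n) : R := dotv v v.

Lemma dotvE n (u v : 'cV[R]_n) : dotv u v = \sum_i u i 0 * v i 0.
Proof. by rewrite /dotv mxE; apply: eq_bigr => i _; rewrite mxE. Qed.

Lemma dotvC n (u v : 'cV[R]_n) : dotv u v = dotv v u.
Proof. by rewrite !dotvE; apply: eq_bigr => i _; rewrite mulrC. Qed.

Lemma dotvDl n (u w v : 'cV[R]_n) : dotv (u + w) v = dotv u v + dotv w v.
Proof. by rewrite !dotvE -big_split; apply: eq_bigr => i _; rewrite mxE mulrDl. Qed.

Lemma dotvZl n a (u v : 'cV[R]_n) : dotv (a *: u) v = a * dotv u v.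
Proof. by rewrite !dotvE mulr_sumr; apply: eq_bigr => i _; rewrite mxE mulrA. Qed.

Lemma dotvBl n (u w v : 'cV[R]_n) : dotv (u - w) v = dotv u v - dotv w v.
Proof. by rewrite dotvDl -scaleN1r dotvZl mulN1r. Qed.

Lemma dotvDr n (u w v : 'cV[R]_n) : dotv v (u + w) = dotv v u + dotv v w.
Proof. by rewrite dotvC dotvDl !(dotvC v). Qed.

Lemma dotvBr n (u w v : 'cV[R]_n) : dotv v (u - w) = dotv v u - dotv v w.
Proof. by rewrite dotvC dotvBl !(dotvC v). Qed.

Lemma dotvZr n a (u v : 'cV[R]_n) : dotv v (a *: u) = a * dotv v u.
Proof. by rewrite dotvC dotvZl dotvC. Qed.

Lemma dotv0 n (v : 'cV[R]_n) : dotv v 0 = 0.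
Proof. by rewrite /dotv mulmx0 mxE. Qed.

Lemma dotv_mulmx m n (B : 'M[R]_(m, n)) u v : dotv u (B *m v) = dotv (B^T *m u) v.
Proof. by rewrite /dotv trmx_mul trmxK mulmxA. Qed.

Lemma dotv_sumr n I (r : seq I) (F : I -> 'M[R]_n) (x y : 'cV[R]_n) :
  dotv x ((\sum_(k <- r) F k) *m y) = \sum_(k <- r) dotv x (F k *m y).
Proof. by rewrite /dotv mulmx_suml mulmx_sumr summxE. Qed.

Lemma sqnormE n (v : 'cV[R]_n) : sqnorm v = \sum_i v i 0 ^+ 2.
Proof. by rewrite /sqnorm dotvE; apply: eq_bigr => i _; rewrite expr2. Qed.

Lemma sqnorm_ge0 n (v : 'cV[R]_n) : 0 <= sqnorm v.
Proof. by rewrite sqnormE; apply: sumr_ge0 => i _; apply: sqr_ge0. Qed.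

Lemma sqnorm_eq0 n (v : 'cV[R]_n) : sqnorm v = 0 -> v = 0.
Proof.
rewrite sqnormE => h; apply/matrixP => i j; rewrite ord1 mxE.
have /eqP : v i 0 ^+ 2 = 0 := psumr_eq0P (fun i _ => sqr_ge0 (v i 0)) h (i := i) isT.
by rewrite sqrf_eq0 => /eqP.
Qed.

Lemma sqnorm_gt0 n (v : 'cV[R]_n) : v != 0 -> 0 < sqnorm v.
Proof.
move=> v0; rewrite lt_def sqnorm_ge0 andbT.
by apply: contraNneq v0 => /sqnorm_eq0 ->.
Qed.

Lemma sqnorm0 n : sqnorm (0 : 'cV[R]_n) = 0.
Proof. exact: dotv0. Qed.

Lemma sqnormZ n a (v : 'cV[R]_n) : sqnorm (a *: v) = a ^+ 2 * sqnorm v.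
Proof. by rewrite /sqnorm dotvZl dotvZr mulrA expr2. Qed.

Lemma sqnormD n (u v : 'cV[R]_n) : sqnorm (u + v) = sqnorm u + 2 * dotv u v + sqnorm v.
Proof. rewrite /sqnorm !dotvDl !dotvDr (dotvC v u); ring. Qed.

Lemma sqnormB n (u v : 'cV[R]_n) : sqnorm (u - v) = sqnorm u - 2 * dotv u v + sqnorm v.
Proof. rewrite /sqnorm !dotvBl !dotvBr (dotvC v u); ring. Qed.

Lemma sqnorm_mulmx m n (B : 'M[R]_(m, n)) (v : 'cV[R]_n) :
  sqnorm (B *m v) = dotv v (B^T *m B *m v).
Proof. by rewrite /sqnorm dotv_mulmx dotvC mulmxA. Qed.

Lemma sqnorm_orthomx m n (Q : 'M[R]_(m, n)) (v : 'cV[R]_n) :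
  Q^T *m Q = 1%:M -> sqnorm (Q *m v) = sqnorm v.
Proof. by move=> QTQ; rewrite sqnorm_mulmx QTQ mul1mx. Qed.

Lemma cauchy_schwarz n (u v : 'cV[R]_n) : dotv u v ^+ 2 <= sqnorm u * sqnorm v.
Proof.
have [->|v0] := eqVneq v 0; first by rewrite dotv0 sqnorm0 mulr0 expr0n.
have vpos := sqnorm_gt0 v0.
have := sqnorm_ge0 (u - (dotv u v / sqnorm v) *: v).
rewrite sqnormB sqnormZ dotvZr.
have -> : sqnorm u - 2 * (dotv u v / sqnorm v * dotv u v)
          + (dotv u v / sqnorm v) ^+ 2 * sqnorm v
        = sqnorm u - dotv u v ^+ 2 / sqnorm v by field; rewrite gt_eqF.
by rewrite subr_ge0 ler_pdivrMr.
Qed.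

Lemma sqnorm_trmx_le m n (B : 'M[R]_(m, n)) c : 0 <= c ->
  (forall y, sqnorm (B *m y) <= c ^+ 2 * sqnorm y) ->
  forall v, sqnorm (B^T *m v) <= c ^+ 2 * sqnorm v.
Proof.
move=> c0 Bc v; set N := sqnorm (B^T *m v).
have N2 : N ^+ 2 <= sqnorm v * (c ^+ 2 * N).
  rewrite {1}/N /sqnorm -dotv_mulmx.
  apply: le_trans (cauchy_schwarz _ _) _; apply: ler_wpM2l; first exact: sqnorm_ge0.
  exact: Bc.
have [->|N0] := eqVneq N 0; first by rewrite mulr_ge0 ?sqr_ge0 ?sqnorm_ge0.
have Npos : 0 < N by rewrite lt_def N0 sqnorm_ge0.
by rewrite -(ler_pM2r Npos) -expr2 (le_trans N2) // mulrCA mulrA.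
Qed.

End DotProduct.

Lemma mxrankM_ker0 (F : fieldType) m n p (Y : 'M[F]_(m, n)) (Z : 'M[F]_(n, p)) :
  (forall b : 'rV[F]_n, (b <= Y)%MS -> b *m Z = 0 -> b = 0) ->
  \rank (Y *m Z) = \rank Y.
Proof.
move=> YZ0; rewrite -[RHS](mxrank_mul_ker Y Z).
suff -> : (Y :&: kermx Z)%MS = 0 by rewrite mxrank0 addn0.
apply/row_matrixP => i; rewrite row0; apply: YZ0.
  exact: submx_trans (row_sub i _) (capmxSl _ _).
by apply/sub_kermxP; exact: submx_trans (row_sub i _) (capmxSr _ _).
Qed.

Section OrthogonalProjectors.
Variables (R : realFieldType) (n : nat).
Implicit Types (P Q : 'M[R]_n) (x y v w : 'cV[R]_n).

Definition is_orthoproj P := P^T = P /\ P *m P = P.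

Lemma orthoprojC P : is_orthoproj P -> is_orthoproj (1%:M - P).
Proof.
move=> [PT PP]; split; first by rewrite linearB /= trmx1 PT.
by rewrite mulmxBl !mulmxBr !mul1mx !mulmx1 PP subrr subr0.
Qed.

Lemma orthoproj_dotv P u v : is_orthoproj P -> dotv (P *m u) v = dotv u (P *m v).
Proof. by move=> [PT _]; rewrite dotv_mulmx PT dotvC. Qed.

Lemma dotv_orthoproj P x : is_orthoproj P -> dotv x (P *m x) = sqnorm (P *m x).
Proof. by move=> hP; rewrite /sqnorm orthoproj_dotv // mulmxA hP.2. Qed.

Lemma sqnorm_orthoproj_split P x : is_orthoproj P ->
  sqnorm x = sqnorm (P *m x) + sqnorm (x - P *m x).
Proof.
move=> hP; have {1}-> : x = P *m x + (x - P *m x) by rewrite addrC subrK.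
rewrite (sqnormD (P *m x)).
suff -> : dotv (P *m x) (x - P *m x) = 0 by rewrite mulr0 addr0.
by rewrite orthoproj_dotv // mulmxBr mulmxA hP.2 subrr dotv0.
Qed.

Lemma sqnorm_orthoproj_le P x : is_orthoproj P -> sqnorm (P *m x) <= sqnorm x.
Proof. by move=> hP; rewrite [leRHS](sqnorm_orthoproj_split _ hP) lerDl sqnorm_ge0. Qed.

(* [P - Q] splits into the orthogonal pieces [P (1 - Q)] and [(1 - P) Q]. *)
Lemma sqnorm_orthoprojB_le P Q c : is_orthoproj P -> is_orthoproj Q ->
  (forall w, sqnorm ((1%:M - P) *m (Q *m w)) <= c ^+ 2 * sqnorm w) ->
  (forall w, sqnorm (P *m ((1%:M - Q) *m w)) <= c ^+ 2 * sqnorm w) ->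
  forall v, sqnorm ((P - Q) *m v) <= c ^+ 2 * sqnorm v.
Proof.
move=> hP hQ PCQ PQC v.
set a := P *m ((1%:M - Q) *m v); set b := (1%:M - P) *m (Q *m v).
have -> : (P - Q) *m v = a - b.
  by rewrite /a /b !mulmxBl !mul1mx mulmxBr mulmxA opprB addrA subrK.
have ab0 : dotv a b = 0.
  by rewrite /a /b orthoproj_dotv // mulmxA mulmxBr mulmx1 hP.2 subrr mul0mx dotv0.
rewrite sqnormB ab0 mulr0 subr0 (sqnorm_orthoproj_split v hQ) mulrDr addrC.
apply: lerD.
  by rewrite /b -{1}hQ.2 -mulmxA; apply: PCQ.
have -> : v - Q *m v = (1%:M - Q) *m v by rewrite mulmxBl mul1mx.
by rewrite /a -{1}(orthoprojC hQ).2 -mulmxA; apply: PQC.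
Qed.

Lemma sqnorm_orthoprojC_lift_le P Q c x y :
  is_orthoproj P -> is_orthoproj Q -> c ^+ 2 <= 1 ->
  Q *m x = x -> P *m x = y ->
  sqnorm (x - P *m x) <= c ^+ 2 * sqnorm x ->
  sqnorm (y - Q *m y) <= c ^+ 2 * sqnorm y.
Proof.
move=> hP hQ c1 Qx Px PCx.
(* [|y|^2 = <Q y, x>], and Cauchy-Schwarz moves the bound from [(1 - P) x] to [(1 - Q) y]. *)
have ay : sqnorm y = dotv (Q *m y) x.
  have Py : P *m y = y by rewrite -Px mulmxA hP.2.
  by rewrite orthoproj_dotv // Qx dotvC /sqnorm -{1}Px orthoproj_dotv // Py.
have CS := cauchy_schwarz (Q *m y) x; rewrite -ay in CS; clear ay.
have sx := sqnorm_orthoproj_split x hP; rewrite Px in sx PCx.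
have sy := sqnorm_orthoproj_split y hQ.
move: CS sx sy PCx.
set a := sqnorm y; set q := sqnorm (Q *m y); set X := sqnorm x.
set e := sqnorm (y - Q *m y); set f := sqnorm (x - y) => CS sx sy PCx.
have a0 : 0 <= a := sqnorm_ge0 _; have q0 : 0 <= q := sqnorm_ge0 _.
have e0 : 0 <= e := sqnorm_ge0 _.
have X1 : (1 - c ^+ 2) * X <= a by rewrite mulrBl mul1r; lra.
have a2 : (1 - c ^+ 2) * a ^+ 2 <= q * a.
  apply: le_trans (ler_wpM2l _ CS) _; first lra.
  by rewrite mulrCA; apply: ler_wpM2l.
have [az|anz] := eqVneq a 0; first by move: sy; rewrite az; lra.
have apos : 0 < a by rewrite lt_def anz a0.
have : (1 - c ^+ 2) * a <= q by rewrite -(ler_pM2r apos) -mulrA -expr2.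
lra.
Qed.

(* Equal ranks force [Q P] to map onto the range of [P] once [(1 - P) Q] is a strict contraction. *)
Lemma orthoproj_lift P Q c : is_orthoproj P -> is_orthoproj Q ->
  \rank P = \rank Q -> c ^+ 2 < 1 ->
  (forall w, sqnorm ((1%:M - P) *m (Q *m w)) <= c ^+ 2 * sqnorm w) ->
  forall y, exists x, Q *m x = x /\ P *m x = P *m y.
Proof.
move=> hP hQ PQrk c1 PCQ y.
have QPrk : \rank (Q *m P) = \rank Q.
  apply: mxrankM_ker0 => b /submxP [z ->] bP; set w := (z *m Q)^T.
  have Qw : Q *m w = w by rewrite /w trmx_mul hQ.1 mulmxA hQ.2.
  have Pw : P *m w = 0 by rewrite /w -hP.1 -trmx_mul bP trmx0.
  have := PCQ w; rewrite Qw mulmxBl mul1mx Pw subr0 => ww.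
  have /sqnorm_eq0 : sqnorm w = 0 by have := sqnorm_ge0 w; nra.
  by move/(congr1 trmx); rewrite trmxK trmx0.
have PsubQP : (P <= Q *m P)%MS.
  by rewrite -(mxrank_leqif_sup (submxMl Q P)).2 QPrk PQrk eqxx.
have /submxP [z Pyz] : ((P *m y)^T <= Q *m P)%MS.
  by apply: submx_trans PsubQP; rewrite trmx_mul hP.1 submxMl.
exists (z *m Q)^T; split; first by rewrite trmx_mul hQ.1 mulmxA hQ.2.
by rewrite -{1}hP.1 -trmx_mul -mulmxA -Pyz trmxK.
Qed.

Lemma orthoproj_swap_le P Q c : is_orthoproj P -> is_orthoproj Q ->
  \rank P = \rank Q -> 0 <= c ->
  (forall w, sqnorm ((1%:M - P) *m (Q *m w)) <= c ^+ 2 * sqnorm w) ->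
  forall v, sqnorm (P *m ((1%:M - Q) *m v)) <= c ^+ 2 * sqnorm v.
Proof.
move=> hP hQ PQrk c0 PCQ.
suff QCP y : sqnorm ((1%:M - Q) *m P *m y) <= c ^+ 2 * sqnorm y.
  by move=> v; have := sqnorm_trmx_le c0 QCP v;
     rewrite trmx_mul hP.1 (orthoprojC hQ).1 mulmxA.
rewrite -mulmxA.
have Pyy : sqnorm (P *m y) <= sqnorm y by apply: sqnorm_orthoproj_le.
have [c1|c1] := leP 1 c.
  have c21 : 1 <= c ^+ 2 by rewrite -(expr1n R 2) ler_sqr ?nnegrE // (le_trans ler01 c1).
  apply: le_trans (sqnorm_orthoproj_le _ (orthoprojC hQ)) _.
  by apply: le_trans Pyy _; rewrite -{1}(mul1r (sqnorm y)) ler_wpM2r // sqnorm_ge0.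
have c21 : c ^+ 2 < 1 by rewrite -(expr1n R 2) ltr_pXn2r ?nnegrE.
apply: le_trans (ler_wpM2l (sqr_ge0 c) Pyy); rewrite mulmxBl mul1mx.
have [x [Qx Px]] := orthoproj_lift hP hQ PQrk c21 PCQ y.
apply: (sqnorm_orthoprojC_lift_le hP hQ (ltW c21) Qx Px).
by have := PCQ x; rewrite Qx mulmxBl mul1mx.
Qed.

End OrthogonalProjectors.

Section SpectralNorm.
Variable R : realType.

Lemma l2normE n (v : 'cV[R]_n) : l2norm v = Num.sqrt (sqnorm v).
Proof. by rewrite /l2norm sqnormE. Qed.

Lemma sqnorm_unit n (v : 'cV[R]_n) : l2norm v = 1 -> sqnorm v = 1.
Proof.
by rewrite l2normE => /(congr1 (fun x => x ^+ 2)); rewrite sqr_sqrtr ?sqnorm_ge0 ?expr1n.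
Qed.

Lemma l2norm_delta n (i : 'I_n) : l2norm (delta_mx i 0 : 'cV[R]_n) = 1.
Proof.
rewrite l2normE sqnormE (bigD1 i) //= big1 ?addr0; first by rewrite !mxE !eqxx expr1n sqrtr1.
by move=> j ji; rewrite mxE (negbTE ji) expr0n.
Qed.

Lemma specnorm_set_bounded m n (B : 'M[R]_(m, n)) :
  has_ubound [set l2norm (B *m v) | v in [set v : 'cV[R]_n | l2norm v = 1]].
Proof.
exists (Num.sqrt (\sum_i sqnorm (row i B)^T)) => _ [v /= /sqnorm_unit v1 <-].
rewrite l2normE ler_sqrt; last by apply: sumr_ge0 => i _; apply: sqnorm_ge0.
rewrite sqnormE -[X in _ <= X]mulr1 -v1 mulr_suml; apply: ler_sum => i _.
have -> : (B *m v) i 0 = dotv (row i B)^T v.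
  by rewrite dotvE mxE; apply: eq_bigr => j _; rewrite !mxE.
exact: cauchy_schwarz.
Qed.

Lemma sqnorm_mulmx_le_specnorm m n (B : 'M[R]_(m, n)) (v : 'cV[R]_n) :
  sqnorm (B *m v) <= specnorm B ^+ 2 * sqnorm v.
Proof.
have [->|v0] := eqVneq v 0; first by rewrite mulmx0 !sqnorm0 mulr0.
have vpos := sqnorm_gt0 v0.
set a := Num.sqrt (sqnorm v); set u := a^-1 *: v.
have apos : 0 < a by rewrite sqrtr_gt0.
have a2 : a ^+ 2 = sqnorm v by rewrite sqr_sqrtr // sqnorm_ge0.
have u1 : l2norm u = 1 by rewrite l2normE sqnormZ exprVn a2 mulVf ?sqrtr1 ?gt_eqF.
have Bu_le : l2norm (B *m u) <= specnorm B.
  by apply: (ub_le_sup (specnorm_set_bounded B)); exists u.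
have Bu_ge0 : 0 <= l2norm (B *m u) by rewrite l2normE sqrtr_ge0.
have spec_ge0 := le_trans Bu_ge0 Bu_le.
have : l2norm (B *m u) ^+ 2 <= specnorm B ^+ 2 by rewrite ler_sqr ?nnegrE.
rewrite l2normE sqr_sqrtr ?sqnorm_ge0 // -scalemxAr sqnormZ exprVn a2.
by rewrite ler_pdivrMl // mulrC.
Qed.

Lemma specnorm_ge0 m n (B : 'M[R]_(m, n)) : (0 < n)%N -> 0 <= specnorm B.
Proof.
move=> n0; pose e : 'cV[R]_n := delta_mx (Ordinal n0) 0.
have Be_le : l2norm (B *m e) <= specnorm B.
  by apply: (ub_le_sup (specnorm_set_bounded B)); exists e => //=; exact: l2norm_delta.
by apply: le_trans Be_le; rewrite l2normE sqrtr_ge0.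
Qed.

Lemma specnorm_le m n (B : 'M[R]_(m, n)) c : (0 < n)%N -> 0 <= c ->
  (forall v, sqnorm (B *m v) <= c ^+ 2 * sqnorm v) -> specnorm B <= c.
Proof.
move=> n0 c0 Bc; apply: ge_sup.
  by exists (l2norm (B *m delta_mx (Ordinal n0) 0)), (delta_mx (Ordinal n0) 0);
     rewrite //=; exact: l2norm_delta.
move=> _ [v /= /sqnorm_unit v1 <-].
rewrite l2normE -(ger0_norm c0) -sqrtr_sqr ler_sqrt ?sqr_ge0 //.
by have := Bc v; rewrite v1 mulr1.
Qed.

End SpectralNorm.

Section RowProjection.
Variable R : realType.

Lemma row_base_gram_unit m n (B : 'M[R]_(m, n)) :
  row_base B *m (row_base B)^T \in unitmx.
Proof.
rewrite -row_free_unit /row_free mxrankM_ker0; first exact: row_base_free.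
move=> b /submxP [D ->] bBT0.
have /sqnorm_eq0 : sqnorm (D *m row_base B)^T = 0.
  by rewrite /sqnorm /dotv trmxK trmx_mul mulmxA bBT0 mul0mx mxE.
by move/(congr1 trmx); rewrite trmxK trmx0.
Qed.

Lemma rowproj_orthoproj m n (B : 'M[R]_(m, n)) : is_orthoproj (rowproj B).
Proof.
rewrite /is_orthoproj /rowproj /=.
have := row_base_gram_unit B; move: (row_base B) => Bb BbU; split.
  by rewrite !trmx_mul trmxK trmx_inv trmx_mul trmxK mulmxA.
rewrite -!mulmxA; congr (_ *m _).
by rewrite (mulmxA Bb) (mulmxA (invmx _) (Bb *m Bb^T)) mulVmx // mul1mx.
Qed.

Lemma mulmx_rowproj m n p (B : 'M[R]_(m, n)) (X : 'M[R]_(p, n)) :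
  (X <= B)%MS -> X *m rowproj B = X.
Proof.
rewrite -(eq_row_base B) => /submxP [D ->]; rewrite /rowproj /=.
have := row_base_gram_unit B; move: (row_base B) => Bb BbU.
by rewrite !mulmxA -(mulmxA D) -(mulmxA D) mulmxV // mulmx1.
Qed.

Lemma rowproj_mulmx_id m n (B : 'M[R]_(m, n)) (x : 'cV[R]_n) :
  (x^T <= B)%MS -> rowproj B *m x = x.
Proof.
move=> xB; rewrite -[x]trmxK -{1}(rowproj_orthoproj B).1 -trmx_mul.
by rewrite mulmx_rowproj.
Qed.

Lemma rowproj_sub m n (B : 'M[R]_(m, n)) : (rowproj B <= B)%MS.
Proof. by rewrite /rowproj /= -(eq_row_base B) submxMl. Qed.

Lemma mxrank_rowproj m n (B : 'M[R]_(m, n)) : \rank (rowproj B) = \rank B.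
Proof.
apply/eqP; rewrite eqn_leq mxrankS ?rowproj_sub //=.
by rewrite -{1}(mulmx_rowproj (submx_refl B)) mxrankM_maxr.
Qed.

Lemma rowproj_unique m n (B : 'M[R]_(m, n)) (Q : 'M[R]_n) :
  Q^T = Q -> (Q <= B)%MS -> B *m Q = B -> rowproj B = Q.
Proof.
move=> QT QB BQ.
have QP : Q *m rowproj B = Q by exact: mulmx_rowproj.
have /submxP [D PD] := rowproj_sub B.
have PQ : rowproj B *m Q = rowproj B by rewrite PD -mulmxA BQ.
by rewrite -PQ -(rowproj_orthoproj B).1 -QT -trmx_mul QP.
Qed.

End RowProjection.

Section DiagonalMatrices.
Variable R : realType.
Implicit Types (s t : nat -> R).

Lemma trmx_diagmx_of a b s : (diagmx_of a b s)^T = diagmx_of b a s.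
Proof. by apply/matrixP => i j; rewrite !mxE eq_sym; case: eqP => // ->. Qed.

Lemma diagmx_ofM a b c s t :
  diagmx_of a b s *m diagmx_of b c t =
  diagmx_of a c (fun i => if (i < b)%N then s i * t i else 0).
Proof.
apply/matrixP => i j; rewrite !mxE.
rewrite (eq_bigr (fun k : 'I_b => if k == i :> nat then
    (if val i == val j then s i * t i else 0) else 0)); last first.
  move=> k _; rewrite !mxE eq_sym; case: eqP => [->|_]; last by rewrite mul0r.
  by case: eqP => _; rewrite ?mulr0.
rewrite -big_mkcond (big_ord1_eq _ (fun _ => if val i == val j then s i * t i else 0)).
by case: eqP; case: ltnP.
Qed.

Lemma diagmx_of_mulcol n s (y : 'cV[R]_n) i :
  (diagmx_of n n s *m y) i 0 = s i * y i 0.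
Proof.
rewrite mxE (eq_bigr (fun k : 'I_n => if k == i :> nat then s i * y i 0 else 0)).
  by rewrite -big_mkcond (big_ord1_eq _ (fun _ => s i * y i 0)) ltn_ord.
move=> k _; rewrite !mxE eq_sym; case: eqP => [/val_inj -> //|_].
by rewrite mul0r.
Qed.

Lemma diagmx_of_eq a b s t :
  (forall i, (i < minn a b)%N -> s i = t i) -> diagmx_of a b s = diagmx_of a b t.
Proof.
move=> st; apply/matrixP => i j; rewrite !mxE.
by case: eqP => // ij; rewrite st // leq_min ltn_ord ij ltn_ord.
Qed.

Lemma diagmx_of1 n : diagmx_of n n (fun _ => 1 : R) = 1%:M.
Proof. by apply/matrixP => i j; rewrite !mxE -val_eqE /=; case: eqP. Qed.

Lemma lcolsE m p r (U : 'M[R]_(m, p)) : lcols r U = U *m diagmx_of p r (fun _ => 1).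
Proof.
apply/matrixP => i j; rewrite !mxE big_mkcond /=.
by apply: eq_bigr => k _; rewrite !mxE; case: eqP => _; rewrite ?mulr1 ?mulr0.
Qed.

Lemma orthomx_lcols m r (U : 'M[R]_m) : (r <= m)%N -> U^T *m U = 1%:M ->
  (lcols r U)^T *m lcols r U = 1%:M.
Proof.
move=> rm UTU; rewrite lcolsE trmx_mul -mulmxA (mulmxA U^T) UTU mul1mx.
rewrite trmx_diagmx_of diagmx_ofM -diagmx_of1; apply: diagmx_of_eq => i.
by rewrite minnn => ir; rewrite (leq_trans ir rm) mulr1.
Qed.

End DiagonalMatrices.

Section TruncatedSVD.
Variable R : realType.
Variables (d n : nat) (A E : 'M[R]_(d, n)) (U : 'M[R]_d) (s : nat -> R) (V : 'M[R]_n).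
Hypothesis svdX : is_svd (A + E) U s V.
Hypothesis rankA_gt0 : (0 < \rank A)%N.
Hypothesis smin_gt0 : 0 < s (\rank A).-1.

Let r := \rank A.
Let Ut := trunc_U r U.
Let Vt := trunc_V r V.
Let St := trunc_S r s.
Let At := trunc_A r U s V.
Let sig := s r.-1.
Let Sinv := diagmx_of r r (fun i => (s i)^-1).

Lemma trunc_sv_ge i : (i < r)%N -> sig <= s i.
Proof. by move=> ir; case: svdX => _ _ _ s_decr _; apply: s_decr; rewrite /r; lia. Qed.

Lemma trunc_sv_gt0 i : (i < r)%N -> 0 < s i.
Proof. by move=> ir; apply: lt_le_trans smin_gt0 (trunc_sv_ge ir). Qed.

Lemma trunc_U_orthomx : Ut^T *m Ut = 1%:M.
Proof. by case: svdX => UTU _ _ _ _; apply: orthomx_lcols; rewrite ?rank_leq_row. Qed.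

Lemma trunc_V_orthomx : Vt^T *m Vt = 1%:M.
Proof. by case: svdX => _ VTV _ _ _; apply: orthomx_lcols; rewrite ?rank_leq_col. Qed.

Lemma trunc_S_invr : St *m Sinv = 1%:M.
Proof.
rewrite /St /trunc_S diagmx_ofM -diagmx_of1; apply: diagmx_of_eq => i.
by rewrite minnn => ir; rewrite ir mulfV // gt_eqF // trunc_sv_gt0.
Qed.

Lemma trmx_svd_mul_trunc_U : (A + E)^T *m Ut = Vt *m St.
Proof.
case: svdX => UTU _ -> _ _.
rewrite /Ut /Vt /St /trunc_U /trunc_V /trunc_S !lcolsE !trmx_mul trmxK.
rewrite -!mulmxA (mulmxA U^T) UTU mul1mx trmx_diagmx_of !diagmx_ofM.
congr (_ *m _); apply: diagmx_of_eq => i; rewrite leq_min => /andP [_ ir].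
by rewrite ir (leq_trans ir (rank_leq_row A)) mulr1 mul1r.
Qed.

Lemma trunc_V_factor : Vt = (A + E)^T *m Ut *m Sinv.
Proof. by rewrite trmx_svd_mul_trunc_U -mulmxA trunc_S_invr mulmx1. Qed.

Lemma trunc_A_eqmx : (At == Vt^T)%MS.
Proof.
apply/andP; split; first by rewrite /At /trunc_A submxMl.
apply/submxP; exists (Sinv *m Ut^T).
rewrite /At /trunc_A -/Ut -/Vt -/St !mulmxA -(mulmxA Sinv) trunc_U_orthomx mulmx1.
by rewrite (mulmx1C trunc_S_invr) mul1mx.
Qed.

Lemma rowproj_trunc_A : rowproj At = Vt *m Vt^T.
Proof.
apply: rowproj_unique; first by rewrite trmx_mul trmxK.
  by rewrite (eqmxP trunc_A_eqmx) submxMl.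
have /submxP [D ->] := proj1 (andP trunc_A_eqmx).
by rewrite -mulmxA (mulmxA Vt^T) trunc_V_orthomx mul1mx.
Qed.

Lemma mxrank_rowproj_trunc_A : \rank (rowproj At) = r.
Proof.
rewrite mxrank_rowproj (eqmxP trunc_A_eqmx); apply/eqP.
by rewrite eqn_leq rank_leq_row -{1}(mxrank1 R r) -trunc_V_orthomx mxrankM_maxl.
Qed.

Lemma sqnorm_trunc_S_inv_le (z : 'cV[R]_r) : sqnorm (Sinv *m z) <= sig^-1 ^+ 2 * sqnorm z.
Proof.
have sig_gt0 : 0 < sig by [].
rewrite !sqnormE mulr_sumr; apply: ler_sum => i _.
rewrite diagmx_of_mulcol exprMn; apply: ler_wpM2r; first exact: sqr_ge0.
have si := trunc_sv_gt0 (ltn_ord i).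
rewrite ler_sqr ?nnegrE ?invr_ge0 ?(ltW si) ?(ltW sig_gt0) // lef_pV2 ?posrE //.
exact: trunc_sv_ge.
Qed.

Lemma sqnorm_trunc_V_mul (x : 'cV[R]_n) : sqnorm (Vt^T *m x) = sqnorm (rowproj At *m x).
Proof.
rewrite sqnorm_mulmx trmxK -rowproj_trunc_A.
by rewrite dotv_orthoproj; last exact: rowproj_orthoproj.
Qed.

(* [A^T] is killed by the projection off row(A), so only the noise [E] survives. *)
Lemma sqnorm_rowprojC_trunc_A_le (w : 'cV[R]_n) :
  sqnorm ((1%:M - rowproj A) *m (rowproj At *m w))
    <= (specnorm (E^T *m Ut) / sig) ^+ 2 * sqnorm w.
Proof.
set P := rowproj A; have hP : is_orthoproj P := rowproj_orthoproj A.
have PC_AT : (1%:M - P) *m A^T = 0.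
  by rewrite mulmxBl mul1mx -hP.1 -trmx_mul mulmx_rowproj // subrr.
set z := Vt^T *m w.
have z_le : sqnorm z <= sqnorm w.
  by rewrite sqnorm_trunc_V_mul; apply/sqnorm_orthoproj_le/rowproj_orthoproj.
rewrite rowproj_trunc_A -mulmxA {1}trunc_V_factor -/z -!mulmxA linearD /=.
rewrite (mulmxDl A^T E^T) mulmxDr (mulmxA _ A^T) PC_AT mul0mx add0r (mulmxA E^T).
apply: le_trans (sqnorm_orthoproj_le _ (orthoprojC hP)) _.
apply: le_trans (sqnorm_mulmx_le_specnorm _ _) _.
rewrite expr_div_n -exprVn -[in leRHS]mulrA; apply: ler_wpM2l; first exact: sqr_ge0.
apply: le_trans (sqnorm_trunc_S_inv_le z) _.
by apply: ler_wpM2l; first exact: sqr_ge0.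
Qed.

Lemma sin_max_angle_trunc_le : sin_max_angle A At <= specnorm (E^T *m Ut) / sig.
Proof.
have n0 : (0 < n)%N by apply: leq_trans rankA_gt0 (rank_leq_col A).
have c0 : 0 <= specnorm (E^T *m Ut) / sig.
  by apply: divr_ge0; [exact: specnorm_ge0 | exact: ltW].
apply: specnorm_le => //.
have PA := rowproj_orthoproj A.
have PAt := rowproj_orthoproj At.
apply: (sqnorm_orthoprojB_le PA PAt sqnorm_rowprojC_trunc_A_le).
apply: (orthoproj_swap_le PA PAt _ c0 sqnorm_rowprojC_trunc_A_le).
by rewrite mxrank_rowproj mxrank_rowproj_trunc_A.
Qed.

Lemma sqr_sin_max_angle_trunc_le :
  sin_max_angle A At ^+ 2
    <= (Num.max (specnorm (E *m Vt)) (specnorm (E^T *m Ut)) / sig) ^+ 2.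
Proof.
have n0 : (0 < n)%N by apply: leq_trans rankA_gt0 (rank_leq_col A).
have sin_ge0 : 0 <= sin_max_angle A At by apply: specnorm_ge0.
have sin_le : sin_max_angle A At
    <= Num.max (specnorm (E *m Vt)) (specnorm (E^T *m Ut)) / sig.
  apply: le_trans sin_max_angle_trunc_le _.
  by rewrite ler_wpM2r ?invr_ge0 ?(ltW smin_gt0) // le_max lexx orbT.
by rewrite ler_sqr ?nnegrE //; apply: le_trans sin_ge0 sin_le.
Qed.

Lemma sqnorm_trunc_V_ge (x : 'cV[R]_n) : (x^T <= A)%MS ->
  (1 - sin_max_angle A At ^+ 2) * sqnorm x <= sqnorm (Vt^T *m x).
Proof.
move=> xA; rewrite sqnorm_trunc_V_mul.
have := sqnorm_orthoproj_split x (rowproj_orthoproj At).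
have -> : x - rowproj At *m x = (rowproj A - rowproj At) *m x.
  by rewrite mulmxBl (rowproj_mulmx_id xA).
have := sqnorm_mulmx_le_specnorm (rowproj A - rowproj At) x.
rewrite mulrBl mul1r /sin_max_angle; lra.
Qed.

End TruncatedSVD.

Section SingularValueBounds.
Variable R : realType.

Lemma sqnorm_mul_mxcol K n (d : 'I_K -> nat) (B : forall k, 'M[R]_(d k, n)) x :
  sqnorm (mxcol B *m x) = \sum_k sqnorm (B k *m x).
Proof.
rewrite sqnorm_mulmx tr_mxcol mul_mxrow_mxcol dotv_sumr.
by apply: eq_bigr => k _; rewrite sqnorm_mulmx.
Qed.

(* [(VM^T *m x) t 0] is the coordinate of [x] along the [t]-th right singular vector. *)
Lemma sqnorm_mulmx_le_sv m n (M : 'M[R]_(m, n)) UM sM VM l (x : 'cV[R]_n) :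
  is_svd M UM sM VM ->
  (forall t : 'I_n, (t < l)%N -> (VM^T *m x) t 0 = 0) ->
  sqnorm (M *m x) <= sM l ^+ 2 * sqnorm x.
Proof.
case=> UTU VTV -> s_decr s_ge0 x_tail.
have VTTVT : VM^T^T *m VM^T = 1%:M by rewrite trmxK mulmx1C.
rewrite -!mulmxA sqnorm_orthomx // -(sqnorm_orthomx x VTTVT).
move: x_tail; set y := VM^T *m x => y_tail.
rewrite sqnorm_mulmx trmx_diagmx_of diagmx_ofM dotvE sqnormE mulr_sumr.
apply: ler_sum => i _; rewrite diagmx_of_mulcol.
have [il|li] := ltnP i l; first by rewrite y_tail // mul0r expr0n mulr0.
have [si0 _] := s_ge0 i; have [sl0 _] := s_ge0 l.
rewrite mulrCA -!expr2; apply: ler_wpM2r; first exact: sqr_ge0.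
case: ifP => _; last by rewrite sqr_ge0.
by rewrite ler_sqr ?nnegrE // s_decr.
Qed.

Lemma exists_capmx_nonzero n p q (W : 'M[R]_(p, n)) (Z : 'M[R]_(q, n)) :
  (n < \rank W + \rank Z)%N -> exists2 b : 'rV[R]_n, b != 0 & (b <= W)%MS && (b <= Z)%MS.
Proof.
move=> WZn.
have cap_gt0 : (0 < \rank (W :&: Z))%N.
  by have := mxrank_sum_cap W Z; have := rank_leq_col (W + Z)%MS; lia.
have [j bj] : exists j, row j (W :&: Z)%MS != 0.
  apply/existsP; apply: contraTT cap_gt0; rewrite negb_exists => /forallP rows0.
  suff -> : (W :&: Z)%MS = 0 by rewrite mxrank0.
  by apply/row_matrixP => j; rewrite row0; apply/eqP/negbNE/rows0.
exists (row j (W :&: Z)%MS) => //.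
by rewrite !(submx_trans (row_sub j _)) ?capmxSl ?capmxSr.
Qed.

Lemma exists_sv_tail_vector n p (W : 'M[R]_(p, n)) (VM : 'M[R]_n) l :
  VM^T *m VM = 1%:M -> (l < \rank W)%N ->
  exists2 x : 'cV[R]_n, x != 0 &
    (x^T <= W)%MS /\ forall t : 'I_n, (t < l)%N -> (VM^T *m x) t 0 = 0.
Proof.
move=> VTV lW; set Z := copid_mx l *m VM^T.
have rankZ : \rank Z = (n - l)%N.
  rewrite mxrankMfree ?rank_copid_mx //; first by have := rank_leq_col W; lia.
  by rewrite -row_leq_rank -{1}(mxrank1 R n) -(mulmx1C VTV) mxrankM_maxr.
have [|b b0 /andP [bW /submxP [w bZ]]] := @exists_capmx_nonzero _ _ _ W Z.
  by rewrite rankZ; have := rank_leq_col W; lia.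
exists b^T; first by rewrite trmx_eq0.
split=> [|t tl]; first by rewrite trmxK.
rewrite -[VM^T *m b^T]trmxK trmx_mul !trmxK mxE bZ /Z -!mulmxA VTV mulmx1.
rewrite mxE; apply: big1 => u _; rewrite !mxE.
case: (eqVneq u t) => [->|ut]; first by rewrite eqxx tl subrr mulr0.
have ut' : (u == t :> nat) = false by apply: contraNF ut => /eqP/val_inj ->.
by rewrite ut' subrr mulr0.
Qed.

End SingularValueBounds.

Unset Implicit Arguments.

Theorem lemma2 (R : realType) (K n : nat) (hK : (1 <= K)%N) (hn : (1 <= n)%N)
  (d : 'I_K -> nat) (A E : forall k : 'I_K, 'M[R]_(d k, n))
  (hr : forall k, (1 <= \rank (A k))%N)
  (U : forall k : 'I_K, 'M[R]_(d k)) (s : 'I_K -> nat -> R)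
  (V : 'I_K -> 'M[R]_n)
  (hsvd : forall k, is_svd (A k + E k) (U k) (s k) (V k))
  (hpos : forall k, 0 < s k (\rank (A k)).-1)
  (UM : 'M[R]_(\sum_(k < K) \rank (A k))) (sM : nat -> R) (VM : 'M[R]_n)
  (hsvdM : is_svd (mxcol (fun k => (trunc_V (\rank (A k)) (V k))^T)) UM sM VM) :
  forall i : nat, (1 <= i <= dim_cap_rows A)%N ->
    K%:R - \sum_(k < K) sin_max_angle (A k)
             (trunc_A (\rank (A k)) (U k) (s k) (V k)) ^+ 2 <= sM i.-1 ^+ 2 /\
    K%:R - \sum_(k < K)
       (Num.max (specnorm (E k *m trunc_V (\rank (A k)) (V k)))
                (specnorm ((E k)^T *m trunc_U (\rank (A k)) (U k)))
        / s k (\rank (A k)).-1) ^+ 2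
    <= K%:R - \sum_(k < K) sin_max_angle (A k)
             (trunc_A (\rank (A k)) (U k) (s k) (V k)) ^+ 2.
Proof.
move=> i /andP [i_gt0 i_le]; split; last first.
  rewrite lerD2l lerN2; apply: ler_sum => k _.
  exact: sqr_sin_max_angle_trunc_le (hsvd k) (hr k) (hpos k).
have [_ VTV _ _ _] := hsvdM.
have i_lt : (i.-1 < dim_cap_rows A)%N by rewrite prednK.
have [x x0 [xW x_tail]] := exists_sv_tail_vector VTV i_lt.
have xA k : (x^T <= A k)%MS.
  by rewrite -(genmxE (A k)); move: k isT; apply/sub_bigcapmxP.
rewrite -(ler_pM2r (sqnorm_gt0 x0)); apply: le_trans (sqnorm_mulmx_le_sv hsvdM x_tail).
rewrite sqnorm_mul_mxcol -[K in K%:R]card_ord -sumr_const -sumrB mulr_suml.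
apply: ler_sum => k _.
exact: (sqnorm_trunc_V_ge (hsvd k) (hr k) (hpos k) (xA k)).
Qed.
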